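(* Fix a non-negative integer $t$ and consider finite rooted trees $T$ such that every root-to-leaf path $v_1,v_2,\ldots,v_q$ satisfies $\sum_{i=1}^{q} c(v_i) \le t$, where $c(v)$ denotes the number of children of node $v$. The maximum number of leaves of such a tree is $l(t)$, where $l(1)=1$ and for $t\ne 1$: $l(t)=3^i$ if $t=3i$; $l(t)=4\cdot 3^{i-1}$ if $t=3i+1$; $l(t)=2\cdot 3^i$ if $t=3i+2$ (with $i$ a non-negative integer). *)

From Stdlib Require Import Arith List.
Import ListNotations.

Inductive tree : Type := Node : list tree -> tree.

Definition nchildren (v : tree) : nat :=
  match v with Node ts => length ts end.

Fixpoint leaves (T : tree) : nat :=
  match T with
  | Node nil => 1
  | Node ts =>
      (fix go (l : list tree) : nat :=
         match l with nil => 0 | x :: r => leaves x + go r end) ts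
  end.

(* rtl_path T p : p = [v_1; ...; v_q] is a root-to-leaf path of T
   (v_1 the root of T, v_q a leaf, v_{i+1} a child of v_i). *)
Inductive rtl_path : tree -> list tree -> Prop :=
  | rtl_leaf : rtl_path (Node nil) [Node nil]
  | rtl_step : forall ts c p, In c ts -> rtl_path c p ->
      rtl_path (Node ts) (Node ts :: p).

Definition admissible (t : nat) (T : tree) : Prop :=
  forall p, rtl_path T p -> list_sum (map nchildren p) <= t.

(* l(t) as in the paper, with i = t / 3. *)
Definition lval (t : nat) : nat :=
  if Nat.eqb t 1 then 1 else
  match t mod 3 with
  | 0 => 3 ^ (t / 3)
  | 1 => 4 * 3 ^ (t / 3 - 1)
  | _ => 2 * 3 ^ (t / 3)
  end.

From Stdlib Require Import Arith List Lia.
Import ListNotations.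

(* The value l(t) satisfies l(t + 3) = 3 l(t) for t >= 2,
   so every property of l that holds for t < 5 and is preserved by t |-> t+3
   (for t >= 2) holds everywhere.  With this induction principle we show
   that l is supermultiplicative, l(a) l(b) <= l(a + b), and that k <= l(k).

   If the root of an admissible tree T has k >= 1 children,
   every child subtree is admissible for t - k (and k <= t), so by induction
   on T:  leaves T <= k l(t - k) <= l(k) l(t - k) <= l(t).

   Let [fan k U] be a root with k copies of U below it; it has
   k (leaves U) leaves and is admissible for k + t when U is admissible for t.
   Fans of leaves realise l(t) for t < 5, and [fan 3] realises the step
   l(t + 3) = 3 l(t). *)

(* l(t + 3) = 3 l(t) once t >= 2 (for t = 1 the special value l(1) = 1 breaks it). *)
Lemma lval_step t : 2 <= t -> lval (t + 3) = 3 * lval t.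
Proof.
  intro Ht. unfold lval.
  replace (Nat.eqb (t + 3) 1) with false by (symmetry; apply Nat.eqb_neq; lia).
  replace (Nat.eqb t 1) with false by (symmetry; apply Nat.eqb_neq; lia).
  replace (t + 3) with (t + 1 * 3) by lia.
  rewrite Nat.div_add, Nat.Div0.mod_add by lia.
  pose proof (Nat.div_mod t 3 ltac:(lia)) as Hdiv.
  pose proof (Nat.mod_upper_bound t 3 ltac:(lia)) as Hmod.
  destruct (t mod 3) as [|[|[|r]]]; try lia.
  - rewrite Nat.pow_add_r. cbn. lia.
  - replace (t / 3 + 1 - 1) with (S (t / 3 - 1)) by lia. cbn. lia.
  - rewrite Nat.pow_add_r. cbn. lia.
Qed.

Lemma step3_ind (P : nat -> Prop) :
  (forall t, t < 5 -> P t) ->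
  (forall t, 2 <= t -> P t -> P (t + 3)) ->
  forall t, P t.
Proof.
  intros Hbase Hstep t. induction t as [t IH] using (well_founded_induction lt_wf).
  destruct (Nat.lt_ge_cases t 5) as [Hsmall | Hlarge]; [now apply Hbase|].
  replace t with ((t - 3) + 3) by lia.
  apply Hstep; [lia | apply IH; lia].
Qed.

Lemma lval_ge_arg k : k <= lval k.
Proof.
  induction k using step3_ind.
  - destruct k as [|[|[|[|[|k]]]]]; cbn; lia.
  - rewrite lval_step by lia. lia.
Qed.

Lemma lval_pos t : 1 <= lval t.
Proof.
  destruct t as [|t]; [cbn; lia|].
  pose proof (lval_ge_arg (S t)). lia.
Qed.

Lemma lval_supermul a b : lval a * lval b <= lval (a + b).
Proof.
  revert b. induction a as [a Ha | a Ha IHa] using step3_ind; intro b.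
  - induction b as [b Hb | b Hb IHb] using step3_ind.
    + destruct a as [|[|[|[|[|a]]]]]; try lia;
      destruct b as [|[|[|[|[|b]]]]]; try lia; cbn; lia.
    + replace (a + (b + 3)) with ((a + b) + 3) by lia.
      rewrite !lval_step by lia. lia.
  - replace (a + 3 + b) with ((a + b) + 3) by lia.
    rewrite !lval_step by lia. specialize (IHa b). lia.
Qed.

Fixpoint tree_ind' (P : tree -> Prop)
  (H : forall ts, (forall c, In c ts -> P c) -> P (Node ts)) (T : tree) : P T :=
  match T with
  | Node ts => H ts ((fix go (l : list tree) : forall c, In c l -> P c :=
      match l with
      | nil => fun c i => False_ind _ i
      | x :: r => fun c i => match i with
                  | or_introl e => eq_ind x P (tree_ind' P H x) c e
                  | or_intror i' => go r c i'
                  end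
      end) ts)
  end.

Lemma leaves_node ts : ts <> nil -> leaves (Node ts) = list_sum (map leaves ts).
Proof.
  induction ts as [|x r IH]; intro Hne; [congruence|].
  destruct r as [|y r]; cbn; [lia|].
  specialize (IH ltac:(discriminate)). cbn in IH. now rewrite IH.
Qed.

Lemma list_sum_map_le {A} (f : A -> nat) m (l : list A) :
  (forall x, In x l -> f x <= m) -> list_sum (map f l) <= length l * m.
Proof.
  induction l as [|x r IH]; intro Hle; [cbn; lia|].
  pose proof (Hle x (or_introl eq_refl)).
  assert (list_sum (map f r) <= length r * m) by (apply IH; auto using in_cons).
  change (f x + list_sum (map f r) <= S (length r) * m). lia.
Qed.

Lemma rtl_path_exists T : exists p, rtl_path T p.
Proof.
  induction T as [ts IH] using tree_ind'.
  destruct ts as [|c r].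
  - exists [Node nil]. constructor.
  - destruct (IH c (or_introl eq_refl)) as [p Hp].
    exists (Node (c :: r) :: p). econstructor; [left; reflexivity | exact Hp].
Qed.

Lemma admissible_child t ts c :
  admissible t (Node ts) -> In c ts -> admissible (t - length ts) c.
Proof.
  intros Hadm Hin p Hp.
  specialize (Hadm _ (rtl_step ts c p Hin Hp)).
  change (length ts + list_sum (map nchildren p) <= t) in Hadm. lia.
Qed.

Lemma admissible_root_le t ts : admissible t (Node ts) -> length ts <= t.
Proof.
  intro Hadm. destruct ts as [|c r]; [cbn; lia|].
  destruct (rtl_path_exists c) as [p Hp].
  specialize (Hadm _ (rtl_step (c :: r) c p (or_introl eq_refl) Hp)).
  change (length (c :: r) + list_sum (map nchildren p) <= t) in Hadm. lia.
Qed.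

(* Upper bound: leaves T <= k l(t - k) <= l(k) l(t - k) <= l(t), where k is
   the number of children of the root. *)
Lemma leaves_upper_bound T : forall t, admissible t T -> leaves T <= lval t.
Proof.
  induction T as [ts IH] using tree_ind'. intros t Hadm.
  destruct ts as [|c0 r]; [apply lval_pos|].
  set (k := length (c0 :: r)).
  assert (Hkt : k <= t) by exact (admissible_root_le t _ Hadm).
  assert (Hchild : list_sum (map leaves (c0 :: r)) <= k * lval (t - k)).
  { apply list_sum_map_le. intros c Hin. apply IH; auto.
    exact (admissible_child t _ c Hadm Hin). }
  pose proof (lval_ge_arg k) as Hk.
  pose proof (lval_supermul k (t - k)) as Hmul.
  replace (k + (t - k)) with t in Hmul by lia.
  rewrite leaves_node by discriminate.
  pose proof (Nat.mul_le_mono_r k (lval k) (lval (t - k))). lia.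
Qed.

Definition fan (k : nat) (U : tree) : tree := Node (repeat U k).

Lemma fan_admissible k t U : admissible t U -> admissible (k + t) (fan k U).
Proof.
  intros Hadm p Hp. inversion Hp as [Hleaf | ts c q Hin Hq]; subst.
  - cbn. lia.
  - apply repeat_spec in Hin. subst c.
    specialize (Hadm _ Hq).
    change (length (repeat U k) + list_sum (map nchildren q) <= k + t).
    rewrite repeat_length. lia.
Qed.

Lemma fan_leaves k U : 1 <= k -> leaves (fan k U) = k * leaves U.
Proof.
  intro Hk. unfold fan. rewrite leaves_node by (destruct k; [lia | discriminate]).
  clear Hk. induction k as [|k IH]; [reflexivity|].
  change (leaves U + list_sum (map leaves (repeat U k)) = S k * leaves U).
  rewrite IH. lia.
Qed.

Lemma leaf_admissible t : admissible t (Node nil).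
Proof.
  intros p Hp. inversion Hp as [| ts c q Hin]; subst; [cbn; lia | destruct Hin].
Qed.

Lemma fan_of_leaves k :
  1 <= k -> admissible k (fan k (Node nil)) /\ leaves (fan k (Node nil)) = k.
Proof.
  intro Hk. split.
  - rewrite <- (Nat.add_0_r k) at 1. apply fan_admissible, leaf_admissible.
  - rewrite fan_leaves by lia. cbn. lia.
Qed.

(* Lower bound: fans of leaves for t < 5, and [fan 3] for t -> t + 3. *)
Lemma lval_attained t : exists T, admissible t T /\ leaves T = lval t.
Proof.
  induction t as [t Ht | t Ht IH] using step3_ind.
  - destruct t as [|[|[|[|[|t]]]]]; try lia.
    + exists (Node nil). split; [apply leaf_admissible | reflexivity].
    + exists (Node nil). split; [apply leaf_admissible | reflexivity].
    + exists (fan 2 (Node nil)). exact (fan_of_leaves 2 ltac:(lia)).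
    + exists (fan 3 (Node nil)). exact (fan_of_leaves 3 ltac:(lia)).
    + destruct (fan_of_leaves 2 ltac:(lia)) as [Hadm Hlv].
      exists (fan 2 (fan 2 (Node nil))). split.
      * exact (fan_admissible 2 2 _ Hadm).
      * rewrite fan_leaves, Hlv by lia. reflexivity.
  - destruct IH as [U [Hadm Hlv]].
    exists (fan 3 U). split.
    + rewrite Nat.add_comm. now apply fan_admissible.
    + rewrite fan_leaves, Hlv, lval_step by lia. reflexivity.
Qed.

Theorem lemma1 (t : nat) :
  (exists T : tree, admissible t T /\ leaves T = lval t) /\
  (forall T : tree, admissible t T -> leaves T <= lval t).
Proof.
  split.
  - apply lval_attained.
  - intros T Hadm. exact (leaves_upper_bound T t Hadm).
Qed.
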